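(* Let $\chi\geq 3$ and $m\geq \vec{R}(\chi)$ be integers, and let $H=H(TT_\chi,m)$. Then for every integer $n\ge 3$, $R(P^{(3)}_{n,2},H)\geq \left(\frac23 n-3\right)(\vec{R}(\chi)-1)+1$; in particular $R(P^{(3)}_{n,2},H)\geq (1+o(1))\frac23(\vec{R}(\chi)-1)n$ as $n\to\infty$.
   Context: $TT_\chi$ denotes the transitive tournament on $[\chi]$. For a tournament $T_\chi$ on $[\chi]$ and $m\ge1$, $H(T_\chi,m)$ is the $3$-uniform hypergraph whose vertex set is partitioned into sets $A_1,\dots,A_\chi$ each of size $m$, with edge set $\{xyz: x,y\in A_i,\ z\in A_j,\ (i,j)\text{ an arc of }T_\chi\}$. $\vec{R}(\ell)$ is the least $N$ such that every tournament on at least $N$ vertices contains a copy of $TT_\ell$. $R(G,H)$ is the least $N$ such that every red/blue colouring of the edges of $K^{(3)}_N$ contains a red copy of $G$ or a blue copy of $H$. The tight path $P^{(3)}_{n,2}$ has vertices $v_1,\dots,v_n$ and edges $\{v_i,v_{i+1},v_{i+2}\}$, $i\in[n-2]$. *)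

From mathcomp Require Import all_boot all_order all_algebra.
Set Implicit Arguments. Unset Strict Implicit. Unset Printing Implicit Defensive.

Definition is_tournament (V : finType) (T : rel V) : Prop :=
  (forall x, ~~ T x x) /\ (forall x y, x != y -> T x y != T y x).

Definition contains_TT (V : finType) (T : rel V) (l : nat) : Prop :=
  exists f : 'I_l -> V, injective f /\ (forall i j : 'I_l, i < j -> T (f i) (f j)).

Definition tourn_arrow (l N : nat) : Prop :=
  forall k, N <= k -> forall T : rel 'I_k, is_tournament T -> contains_TT T l.

Definition is_tourn_ramsey (l r : nat) : Prop :=
  tourn_arrow l r /\ (forall N, tourn_arrow l N -> r <= N).

(* A copy of (V,E) in colour b under c : {set 'I_N} -> bool
   (c e = true means the triple e is red, false means blue). *)
Definition mono_copy (N : nat) (c : {set 'I_N} -> bool) (b : bool)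
  (V : finType) (E : {set {set V}}) : Prop :=
  exists f : V -> 'I_N, injective f /\ (forall e, e \in E -> c (f @: e) = b).

(* Tight path P^{(3)}_{n,2} on vertices 0..n-1 (v_{i+1} = i),
   edges {i, i+1, i+2} for i + 2 < n. *)
Definition tight_path_edges (n : nat) : {set {set 'I_n}} :=
  [set e : {set 'I_n} | [exists i : 'I_n,
     (i.+2 < n) && (e == [set x : 'I_n | (i <= x) && (x <= i.+2)])]].

(* H(T_chi, m): vertex set 'I_chi * 'I_m, A_i = {i} * 'I_m,
   edges xyz with x,y in A_i (x != y), z in A_j, (i,j) an arc of T. *)
Definition Hedges (chi m : nat) (T : rel 'I_chi) : {set {set ('I_chi * 'I_m)}} :=
  [set e : {set ('I_chi * 'I_m)} | [exists x, exists y, exists z,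
     [&& x.1 == y.1, x != y, T x.1 z.1 & e == [set x; y; z]]]].

Definition TT (chi : nat) : rel 'I_chi := fun i j => i < j.

Definition ramsey_arrow_path_H (n chi m N : nat) : Prop :=
  forall c : {set 'I_N} -> bool,
    mono_copy c true (tight_path_edges n) \/ mono_copy c false (@Hedges chi m (@TT chi)).

(* Let T be a tournament on r - 1 vertices with no TT_chi (it exists by
   minimality of r) and split the N vertices into r - 1 classes of size at most
   s = 2 floor(n/3) - 1.  Colour a triple red when two of its vertices share a
   class a that sends no arc of T to the class of any vertex of the triple.
   In a blue copy of H(TT_chi, m) each A_i has m > r - 1 vertices, so two of
   them share a class c_i, and blueness of the edge they form with a vertex of
   A_j forces the arc c_i -> c_j: the c_i span a TT_chi in T.  In a red tight
   path consecutive edges share two vertices, so their sink classes coincide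
   (two distinct ones would not beat each other); thus one class holds two of
   every three consecutive path vertices, more than s in total.  Hence
   N > s (r - 1). *)

From mathcomp Require Import all_boot all_order all_algebra.
From mathcomp Require Import zify lra.
From Stdlib Require Import Classical.
Import Order.TTheory GRing.Theory Num.Theory.
Set Implicit Arguments. Unset Strict Implicit. Unset Printing Implicit Defensive.

Lemma TT_tournament k : is_tournament (@TT k).
Proof.
split=> [i|i j]; first by rewrite /TT ltnn.
by rewrite /TT; case: ltngtP => // /val_inj ->; rewrite eqxx.
Qed.

Lemma is_tournament_relpre (V W : finType) (h : W -> V) (T : rel V) :
  injective h -> is_tournament T -> is_tournament (relpre h T).
Proof.
move=> h_inj [Tirr Tarc]; split=> [x|x y]; first exact: Tirr.
by rewrite -(inj_eq h_inj); apply: Tarc.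
Qed.

Lemma contains_TT_relpre (V W : finType) (h : W -> V) (T : rel V) l :
  injective h -> contains_TT (relpre h T) l -> contains_TT T l.
Proof.
move=> h_inj [g [g_inj g_arc]]; exists (h \o g); split; last exact: g_arc.
exact: inj_comp.
Qed.

Lemma contains_TT_of_chain (V : finType) (T : rel V) l (g : 'I_l -> V) :
  (forall x, ~~ T x x) -> (forall i j : 'I_l, i < j -> T (g i) (g j)) ->
  contains_TT T l.
Proof.
move=> Tirr g_arc; exists g; split=> // i j gij.
apply: val_inj; case: (ltngtP i j) => // /g_arc; rewrite gij.
- by rewrite (negbTE (Tirr _)).
- by rewrite (negbTE (Tirr _)).
Qed.

Lemma tourn_ramsey_ge l r : is_tourn_ramsey l r -> l <= r.
Proof.
case=> arrow _; have [g [g_inj _]] := arrow r (leqnn r) _ (@TT_tournament r).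
by have := leq_card _ g_inj; rewrite !card_ord.
Qed.

Lemma tourn_ramsey_extremal l r : is_tourn_ramsey l r -> 0 < r ->
  exists T : rel 'I_r.-1, is_tournament T /\ ~ contains_TT T l.
Proof.
case=> _ r_min r_gt0.
have : ~ tourn_arrow l r.-1 by move/r_min; lia.
move=> /not_all_ex_not[k /not_all_ex_not[le_rk /not_all_ex_not[T]]].
move=> no_arrow; have [Ttour noTT] := imply_to_and _ _ no_arrow.
have widen_inj : injective (widen_ord le_rk) by move=> i j /(congr1 val) /= /val_inj.
exists (relpre (widen_ord le_rk) T); split; first exact: is_tournament_relpre.
by move/(contains_TT_relpre widen_inj).
Qed.

Lemma balanced_partition N K s : N <= s * K ->
  exists p : 'I_N -> 'I_K, forall a, #|[set x | p x == a]| <= s.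
Proof.
move=> le_N_sK.
have div_lt (x : 'I_N) : x %/ s < K.
  case: s le_N_sK => [|s] le_N_sK; first by have := ltn_ord x; lia.
  by rewrite ltn_divLR //; have := ltn_ord x; lia.
exists (fun x => Ordinal (div_lt x)) => a.
case: s le_N_sK div_lt => [|s] le_N_sK div_lt.
  by apply: leq_trans (max_card _) _; rewrite card_ord; lia.
pose mod_ord (x : 'I_N) := Ordinal (ltn_pmod x (ltn0Sn s)).
have mod_inj : {in [set x | Ordinal (div_lt x) == a] &, injective mod_ord}.
  move=> x y; rewrite !inE => /eqP/(congr1 val) /= div_x /eqP/(congr1 val) /= div_y.
  move=> /(congr1 val) /= mod_xy.
  by apply: val_inj; rewrite /= (divn_eq x s.+1) (divn_eq y s.+1) div_x div_y mod_xy.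
by have := leq_card_in mod_ord _ mod_inj; rewrite card_ord.
Qed.

Lemma exists_collision (A B : finType) (h : A -> B) :
  #|B| < #|A| -> exists x y, x != y /\ h x = h y.
Proof.
move=> ltBA; have /injectivePn[x [y neq_xy eq_hxy]] : ~~ injectiveb h.
  by apply: contraL ltBA => /injectiveP/leq_card; rewrite -leqNgt.
by exists x, y.
Qed.

Lemma tight_path_window n t : t.+2 < n.+1 ->
  [set inord t; inord t.+1; inord t.+2] \in tight_path_edges n.+1.
Proof.
move=> lt_tn; rewrite inE; apply/existsP; exists (inord t).
rewrite inordK; last lia.
rewrite lt_tn eq_sym; apply/eqP/setP => x; rewrite !inE -!val_eqE /= !inordK; lia.
Qed.

Section SinkColouring.

Variables (V : finType) (T : rel V) (N : nat) (p : 'I_N -> V).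
Hypothesis T_tournament : is_tournament T.

Definition sink_colouring (e : {set 'I_N}) : bool :=
  [exists u in e, exists v in e,
    [&& u != v, p u == p v & [forall w in e, ~~ T (p u) (p w)]]].

Lemma blue_triple_arc A B C : ~~ sink_colouring [set A; B; C] ->
  A != B -> p A = p B -> T (p A) (p C).
Proof.
case: T_tournament => Tirr _ not_red neq_AB eq_pAB.
move/existsPn/(_ A): not_red; rewrite !inE eqxx /= => /existsPn/(_ B).
rewrite !inE eqxx orbT neq_AB eq_pAB eqxx /= => /forallPn[w].
rewrite negb_imply negbK !inE -orbA => /andP[/or3P[] /eqP-> //];
  by rewrite ?eq_pAB (negbTE (Tirr _)).
Qed.

Lemma blue_H_contains_TT chi m : #|V| < m ->
  mono_copy sink_colouring false (@Hedges chi m (@TT chi)) -> contains_TT T chi.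
Proof.
case: T_tournament => Tirr _ ltVm [f [f_inj f_blue]].
have collision (i : 'I_chi) : exists xy : 'I_m * 'I_m,
    (xy.1 != xy.2) && (p (f (i, xy.1)) == p (f (i, xy.2))).
  have [|x [y [neq_xy eq_pxy]]] := exists_collision (fun x => p (f (i, x))).
    by rewrite card_ord.
  by exists (x, y); rewrite neq_xy eq_pxy eqxx.
have [xy xyP] := fin_all_exists collision.
apply: (@contains_TT_of_chain _ _ _ (fun i => p (f (i, (xy i).1))) Tirr) => i j lt_ij.
have /andP[neq_xy /eqP eq_pxy] := xyP i.
have H_edge : [set (i, (xy i).1); (i, (xy i).2); (j, (xy j).1)] \in Hedges m (@TT chi).
  rewrite inE; apply/existsP; exists (i, (xy i).1); apply/existsP; exists (i, (xy i).2).
  by apply/existsP; exists (j, (xy j).1); rewrite /TT /= xpair_eqE !eqxx neq_xy lt_ij.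
have := f_blue _ H_edge; rewrite imsetU imsetU1 !imset_set1 => /negbT/blue_triple_arc.
by apply=> //; rewrite (inj_eq f_inj) xpair_eqE eqxx.
Qed.

Definition window_sink (a x y z : V) : bool :=
  [&& 2 <= (x == a) + (y == a) + (z == a), ~~ T a x, ~~ T a y & ~~ T a z].

Lemma window_sink_unique a b x y z w :
  window_sink a x y z -> window_sink b y z w -> a = b.
Proof.
case: T_tournament => _ Tarc /and4P[count_a ax ay az] /and4P[count_b yb zb wb].
have a_yz : (y == a) || (z == a) by move: count_a; case: (x == a); case: eqP; case: eqP.
have b_yz : (y == b) || (z == b) by move: count_b; case: (w == b); case: eqP; case: eqP.
have ba : ~~ T b a by case/orP: a_yz => /eqP <-.
have ab : ~~ T a b by case/orP: b_yz => /eqP <-.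
by case: (eqVneq a b) => // /Tarc; rewrite (negbTE ab) (negbTE ba).
Qed.

Lemma sink_colouring_window_sink A B C :
  sink_colouring [set A; B; C] -> exists a, window_sink a (p A) (p B) (p C).
Proof.
case/existsP=> u /andP[u_e /existsP[v /andP[v_e /and3P[neq_uv /eqP eq_puv /forallP no_arc]]]].
exists (p u); apply/and4P; split; last 3 first.
- by have := no_arc A; rewrite !inE eqxx.
- by have := no_arc B; rewrite !inE eqxx orbT.
- by have := no_arc C; rewrite !inE eqxx !orbT.
move: u_e v_e neq_uv eq_puv; rewrite !inE -!orbA.
by case/or3P=> /eqP-> /or3P[]/eqP->; rewrite ?eqxx // => _ ->; rewrite eqxx; lia.
Qed.

Lemma window_sink_constant (q : nat -> V) n : 2 < n ->
  (forall t, t.+2 < n -> exists a, window_sink a (q t) (q t.+1) (q t.+2)) ->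
  exists a, forall t, t.+2 < n -> window_sink a (q t) (q t.+1) (q t.+2).
Proof.
move=> n_gt2 windows; have [a sink0] := windows 0 n_gt2.
exists a; elim=> [//|t IH] lt_tn; have [b sink_b] := windows _ lt_tn.
by rewrite (window_sink_unique (IH (ltnW lt_tn)) sink_b).
Qed.

Lemma window_sink_count (q : nat -> V) n a :
  (forall t, t.+2 < n -> window_sink a (q t) (q t.+1) (q t.+2)) ->
  2 * (n %/ 3) <= \sum_(0 <= t < n) (q t == a).
Proof.
move=> sinks.
have prefix j : 3 * j <= n -> 2 * j <= \sum_(0 <= t < 3 * j) (q t == a).
  elim: j => [|j IH] le_jn; first by rewrite muln0.
  have -> : 3 * j.+1 = (3 * j).+3 by rewrite mulnS.
  rewrite !big_nat_recr //=.
  have /and4P[two_a _ _ _] := sinks (3 * j) ltac:(lia).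
  have := IH ltac:(lia); lia.
have le_n : 3 * (n %/ 3) <= n by rewrite mulnC leq_trunc_div.
apply: leq_trans (prefix _ le_n) _.
by rewrite [leqRHS](@big_cat_nat _ _ _ (3 * (n %/ 3))) ?leq_addr.
Qed.

Lemma red_path_large_class n : 2 < n ->
  mono_copy sink_colouring true (tight_path_edges n) ->
  exists a, 2 * (n %/ 3) <= #|[set x | p x == a]|.
Proof.
case: n => [//|n] n_gt2 [f [f_inj f_red]].
pose q t := p (f (inord t)).
have windows t : t.+2 < n.+1 -> exists a, window_sink a (q t) (q t.+1) (q t.+2).
  move=> lt_tn; apply: sink_colouring_window_sink.
  by have := f_red _ (tight_path_window lt_tn); rewrite imsetU imsetU1 !imset_set1.
have [a sinks] := window_sink_constant n_gt2 windows.
exists a; apply: leq_trans (window_sink_count sinks) _.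
have -> : \sum_(0 <= t < n.+1) (q t == a) = #|[set t | p (f t) == a]|.
  rewrite big_mkord -sum1dep_card [RHS]big_mkcond /=; apply: eq_bigr => t _.
  by rewrite /q inord_val; case: (p (f t) == a).
rewrite -(card_imset _ f_inj); apply/subset_leq_card/subsetP => x /imsetP[t].
by rewrite !inE => pt ->.
Qed.

End SinkColouring.

Theorem proposition1p15 (chi m r n : nat) :
  3 <= chi -> is_tourn_ramsey chi r -> r <= m -> 3 <= n ->
  forall N : nat, ramsey_arrow_path_H n chi m N ->
    ((2%:R / 3%:R * n%:R - 3%:R) * (r%:R - 1) + 1 <= (N%:R : rat))%R.
Proof.
move=> chi_ge3 ramsey le_rm n_ge3 N arrow.
have le_chi_r := tourn_ramsey_ge ramsey.
have [T [T_tour noTT]] := tourn_ramsey_extremal ramsey ltac:(lia).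
have n3_gt0 : 0 < n %/ 3 by rewrite divn_gt0.
pose s := 2 * (n %/ 3) - 1.
have lt_sr_N : s * r.-1 < N.
  rewrite ltnNge; apply/negP => /balanced_partition[p p_small].
  case: (arrow (sink_colouring T p)) => [/(red_path_large_class T_tour n_ge3)[a] | blue].
    by move=> /leq_trans/(_ (p_small a)); rewrite /s; lia.
  by apply/noTT/(blue_H_contains_TT T_tour _ blue); rewrite card_ord; lia.
have r_ge1 : 1 <= r by lia.
have le_N : (s%:R * (r%:R - 1) + 1 <= N%:R :> rat)%R.
  by rewrite -(natrB _ r_ge1) -natrM natr1 ler_nat subn1.
have le_n_s : (2 * n%:R <= 3 * s%:R + 7 :> rat)%R.
  by rewrite -!natrM -natrD ler_nat /s; lia.
have r1_ge0 : (0 <= r%:R - 1 :> rat)%R by rewrite subr_ge0 ler1n.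
apply: le_trans le_N; rewrite lerD2r; apply: ler_wpM2r => //; lra.
Qed.
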